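(* Let $m\ge1$ and $\mathcal{B}=\mathcal{B}_{1,m}=G_m$ (the block of cells of size $1$). Then $$\langle\chi_{\mathcal{B}},\ \det\cdot\varepsilon\cdot\psi\rangle_{\mathcal{B}}=\frac{\binom{2m}{m}}{4^m},\qquad \langle\chi_{\mathcal{B}},\ \det\cdot\psi\rangle_{\mathcal{B}}=\frac{(-1)^{m+1}}{2m}\cdot\frac{\binom{2m-2}{m-1}}{4^{m-1}}.$$ In particular the first quantity equals $|L_m|/|G_m|$, where $L_m$ is the set of elements of $G_m$ satisfying condition (L).
   Context: $G_m$ is the signed permutation group of bijections of $\{\pm1,\dots,\pm m\}$ commuting with negation; write $g\in G_m$ as $(s_1,\dots,s_m;\sigma)$, $s_i\in\{\pm1\}$, $\sigma\in S_m$ (the signed permutation matrix with $(\sigma(i),i)$ entry $s_i$). Here $\psi\equiv1$, $\varepsilon(g)=\operatorname{sgn}(\sigma)$, and $\det(g)=\operatorname{sgn}(\sigma)$ is the sign of the underlying permutation (signs forgotten). An element $g\in G_m$ satisfies condition (L) if for every $i$ the points $i$ and $-i$ lie in different orbits of $\langle g\rangle$ on $\{\pm1,\dots,\pm m\}$; $\chi_{\mathcal{B}}$ is the indicator of (L). For functions $\alpha,\beta$ on a finite group $H$, $\langle\alpha,\beta\rangle_H=\frac1{|H|}\sum_{h\in H}\alpha(h)\overline{\beta(h)}$. *)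

From HB Require Import structures.
From mathcomp Require Import all_boot all_order all_algebra all_fingroup.
Set Implicit Arguments. Unset Strict Implicit. Unset Printing Implicit Defensive.
Import GRing.Theory Num.Theory.
Local Open Scope ring_scope.

(* The signed permutation group G_m: g = (s_1..s_m ; sigma), s_i = (-1)^(s i)
   encoded by a boolean (true = -1). *)
Definition Gm (m : nat) : finType := ({ffun 'I_m -> bool} * {perm 'I_m})%type.

(* The points {+-1,...,+-m}: (i, b) stands for (-1)^b (i+1). *)
Definition Pt (m : nat) : finType := ('I_m * bool)%type.

Definition gact (m : nat) (g : Gm m) (x : Pt m) : Pt m :=
  (g.2 x.1, x.2 (+) g.1 x.1).

Definition condL (m : nat) (g : Gm m) : bool :=
  [forall i : 'I_m, ~~ fconnect (gact g) (i, false) (i, true)].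

Definition chiB (m : nat) (g : Gm m) : rat := (condL g)%:R.
Definition psi (m : nat) (g : Gm m) : rat := 1.
Definition eps (m : nat) (g : Gm m) : rat := (-1) ^+ odd_perm g.2.
Definition detG (m : nat) (g : Gm m) : rat := (-1) ^+ odd_perm g.2.

(* <alpha, beta>_H = 1/|H| sum alpha(h) conj(beta(h)); values are rational (real),
   so conjugation is the identity. *)
Definition inner (T : finType) (a b : T -> rat) : rat :=
  (#|T|%:R)^-1 * \sum_(h : T) a h * b h.

Definition Lset (m : nat) : {set Gm m} := [set g | condL g].

From Pilot Require Import Defs.
From HB Require Import structures.
From mathcomp Require Import all_boot all_order all_algebra all_fingroup.
From mathcomp Require Import ring zify.
Import GRing.Theory Num.Theory.
Local Open Scope ring_scope.

(** Every element of G_(m+1) is obtained from a unique element g of G_m by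
    inserting the new point m+1, with a sign b, into the cycle of g right after
    some j, or as a new fixed point (j = m+1).  The orbits of g on the old points
    are not affected, so (L) survives except when m+1 becomes a fixed point with
    sign -1; and the underlying permutation changes parity iff m+1 is inserted
    into an existing cycle.  Summing over the 2(m+1) extensions gives
    |L_(m+1)| = (2m+1) |L_m| and, for the signed count D_m of L_m,
    D_(m+1) = (1-2m) D_m.  Hence |L_m| = (2m)!/(2^m m!) and
    D_(m+1) = (-1)^m |L_m|, which are the two claimed inner products once divided
    by |G_m| = 2^m m!. *)

Section Detour.
Context {T T' : finType} {f : T -> T} {f' : T' -> T'} {e : T' -> T} (A : pred T).
Hypothesis e_inj : injective e.
Hypothesis A_e : forall y, A (e y).
Hypothesis f_detour : forall y,
  f (e y) = e (f' y) \/ ~~ A (f (e y)) /\ f (f (e y)) = e (f' y).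

Lemma fconnect_detour x y : fconnect f (e x) (e y) = fconnect f' x y.
Proof.
apply/idP/idP.
- move=> /iter_findex; move: (findex _ _ _) => n.
  elim/ltn_ind: n x => -[|n] IHn x; first by move/e_inj ->; exact: connect0.
  rewrite iterSr; have [-> | [notA ffe]] := f_detour x.
    by move/(IHn n (ltnSn n)); apply: connect_trans (fconnect1 _ _).
  case: n IHn => [|n] IHn; first by move=> /= fex; rewrite fex A_e in notA.
  rewrite iterSr ffe => /(IHn n (ltnW (ltnSn _))).
  exact: connect_trans (fconnect1 _ _).
- move=> /iter_findex <-; elim: (findex _ _ _) => [|n IHn] /=; first exact: connect0.
  apply: (connect_trans IHn); have [<- | [_ <-]] := f_detour (iter n f' x).
    exact: fconnect1.
  exact: connect_trans (fconnect1 _ _) (fconnect1 _ _).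
Qed.

End Detour.

Lemma gact_inj m (g : Gm m) : injective (Defs.gact g).
Proof.
move=> [i b] [i' b'] [/perm_inj eq_i]; rewrite /= eq_i.
by case: b b' => -[] //; case: (g.1 i').
Qed.

Lemma card_Gm m : #|Gm m| = (2 ^ m * m`!)%N.
Proof. by rewrite card_prod card_ffun card_bool card_ord card_Sn. Qed.

Lemma card_GmS m : #|Gm m.+1| = (2 * m.+1 * #|Gm m|)%N.
Proof. by rewrite !card_Gm expnS factS; ring. Qed.

Lemma natr_card_Gm_neq0 m : #|Gm m|%:R != 0 :> rat.
Proof. by rewrite pnatr_eq0 -lt0n card_Gm muln_gt0 expn_gt0 fact_gt0. Qed.

Section Extension.
Context {m : nat}.
Implicit Types (g : Gm m) (j : 'I_m.+1) (b : bool).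

Definition lift_pt (x : Pt m) : Pt m.+1 := (lift ord_max x.1, x.2).

Definition lift_gperm g : {perm 'I_m.+1} := lift_perm ord_max ord_max g.2.

(* In cycle notation, m+1 is inserted between j and sigma(j); for j = m+1 it
   becomes a new fixed point. *)
Definition extend_perm g j : {perm 'I_m.+1} :=
  (lift_gperm g * tperm ord_max (lift_gperm g j))%g.

(* The new point gets the sign b and the sign of j is multiplied by b, so that
   the product of the signs along the enlarged cycle is unchanged. *)
Definition extend_sign g j b : {ffun 'I_m.+1 -> bool} :=
  [ffun x => if unlift ord_max x is Some i then g.1 i (+) (b && (x == j)) else b].

Definition extend g j b : Gm m.+1 := (extend_sign g j b, extend_perm g j).

Lemma lift_pt_inj : injective lift_pt.
Proof.
move=> [i b] [i' b'] eq_pt.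
have /lift_inj -> : lift ord_max i = lift ord_max i' := congr1 fst eq_pt.
by have -> : b = b' := congr1 snd eq_pt.
Qed.

Lemma extend_perm_max g j : extend_perm g j ord_max = lift_gperm g j.
Proof. by rewrite permM lift_perm_id tpermL. Qed.

Lemma extend_perm_self g j : extend_perm g j j = ord_max.
Proof. by rewrite permM tpermR. Qed.

Lemma extend_perm_lift g j i : lift ord_max i != j ->
  extend_perm g j (lift ord_max i) = lift ord_max (g.2 i).
Proof.
move=> ne_ij; rewrite permM lift_perm_lift tpermD ?neq_lift //.
by rewrite -(lift_perm_lift ord_max ord_max g.2) (inj_eq perm_inj) eq_sym.
Qed.

Lemma extend_sign_max g j b : extend_sign g j b ord_max = b.
Proof. by rewrite ffunE unlift_none. Qed.

Lemma extend_sign_lift g j b i :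
  extend_sign g j b (lift ord_max i) = g.1 i (+) (b && (lift ord_max i == j)).
Proof. by rewrite ffunE liftK. Qed.

Lemma gact_extend_lift g j b x :
  Defs.gact (extend g j b) (lift_pt x) = lift_pt (Defs.gact g x) \/
  (Defs.gact (extend g j b) (lift_pt x)).1 == ord_max /\
  Defs.gact (extend g j b) (Defs.gact (extend g j b) (lift_pt x)) = lift_pt (Defs.gact g x).
Proof.
case: x => i c; rewrite /Defs.gact /lift_pt /=.
have [<- | ne_ij] := eqVneq (lift ord_max i) j; last first.
  by left; rewrite extend_perm_lift // extend_sign_lift (negbTE ne_ij) andbF addbF.
right; rewrite extend_perm_self extend_perm_max extend_sign_max extend_sign_lift.
rewrite lift_perm_lift (eqxx (lift ord_max i)) andbT; split=> //.
by rewrite -addbA addbK.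
Qed.

Lemma fconnect_extend_lift g j b x y :
  fconnect (Defs.gact (extend g j b)) (lift_pt x) (lift_pt y) = fconnect (Defs.gact g) x y.
Proof.
apply: (fconnect_detour (fun p : Pt m.+1 => p.1 != ord_max) lift_pt_inj).
  by move=> z; rewrite /= eq_sym neq_lift.
by move=> z; rewrite negbK; apply: gact_extend_lift.
Qed.

Lemma condL_extend g j b :
  condL (extend g j b) = condL g && ((j != ord_max) || ~~ b).
Proof.
have max_step c : Defs.gact (extend g j b) (ord_max, c) = (lift_gperm g j, c (+) b).
  by rewrite /Defs.gact extend_perm_max extend_sign_max.
apply/forallP/andP => [condLx | [/forallP condLg no_neg_fixpt] i].
  split.
    by apply/forallP => i; rewrite -(fconnect_extend_lift g j b (i, false)); apply: condLx.
  apply: contraTT (condLx ord_max); rewrite negb_or !negbK => /andP[/eqP j_max b_true].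
  have -> : (ord_max, true) = Defs.gact (extend g j b) (ord_max, false).
    by rewrite max_step j_max lift_perm_id b_true.
  exact: fconnect1.
have [i' ->|->] := unliftP ord_max i.
  by move: (condLg i'); rewrite -(fconnect_extend_lift g j b (i', false)).
have [j' j_lift | j_max] := unliftP ord_max j; last first.
  apply/negP => /iter_findex; rewrite iter_fix // max_step j_max lift_perm_id.
  by move: no_neg_fixpt; rewrite j_max eqxx => /negbTE ->.
rewrite (same_fconnect1 (@gact_inj _ _)) same_fconnect1_r ?max_step; last exact: gact_inj.
rewrite j_lift lift_perm_lift -[(lift _ _, _)]/(lift_pt (g.2 j', false (+) b)).
rewrite -[(lift _ _, true (+) b)]/(lift_pt (g.2 j', true (+) b)) fconnect_extend_lift.
case: b {no_neg_fixpt max_step} => /=; last exact: condLg.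
by rewrite fconnect_sym ?condLg //; exact: gact_inj.
Qed.

Lemma odd_extend_perm g j :
  odd_perm (extend_perm g j) = odd_perm g.2 (+) (j != ord_max).
Proof.
rewrite odd_permM odd_tperm odd_lift_perm addbb /=.
by rewrite -{1}(lift_perm_id ord_max ord_max g.2) (inj_eq perm_inj) eq_sym.
Qed.

Lemma lift_gperm_extend g j :
  lift_gperm g = (extend_perm g j * tperm ord_max (extend_perm g j ord_max))%g.
Proof. by rewrite extend_perm_max /extend_perm -[X in (_ * X)%g]tpermV mulgK. Qed.

Lemma extend_inj : injective (fun x : Gm m * 'I_m.+1 * bool => extend x.1.1 x.1.2 x.2).
Proof.
move=> [[[s p] j] b] [[[s' p'] j'] b'] [eq_sign eq_perm] /=.
have eq_j : j = j'.
  by apply: (@perm_inj _ (extend_perm (s, p) j)); rewrite extend_perm_self eq_perm extend_perm_self.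
subst j'.
have eq_b : b = b' by rewrite -(extend_sign_max (s, p) j b) eq_sign extend_sign_max.
subst b'.
have eq_lift : lift_gperm (s, p) = lift_gperm (s', p').
  by rewrite (lift_gperm_extend _ j) eq_perm -lift_gperm_extend.
have eq_p : p = p'.
  apply/permP => i; apply: (@lift_inj _ ord_max).
  by rewrite -!(lift_perm_lift ord_max ord_max) -[lift_perm _ _ p]/(lift_gperm (s, p)) eq_lift.
subst p'; congr (_, _, _, _); apply/ffunP => i.
move: (congr1 (fun s : {ffun _ -> bool} => s (lift ord_max i)) eq_sign).
by rewrite /= !extend_sign_lift => /addIb.
Qed.

Lemma big_extend (R : Type) (idx : R) (op : Monoid.com_law idx) (F : Gm m.+1 -> R) :
  \big[op/idx]_(g : Gm m.+1) F g =
  \big[op/idx]_(g : Gm m) \big[op/idx]_(j < m.+1) \big[op/idx]_(b : bool) F (extend g j b).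
Proof.
rewrite (reindex _ (onW_bij _ (inj_card_bij extend_inj _))); last first.
  by rewrite card_GmS !card_prod card_bool card_ord; nia.
rewrite (pair_bigA _ (fun g j => \big[op/idx]_(b : bool) F (extend g j b))).
by rewrite (pair_bigA _ (fun x b => F (extend x.1 x.2 b))).
Qed.

End Extension.

Lemma sum_extend_factor m (F : Gm m.+1 -> rat) (G : Gm m -> rat) (c : bool -> bool -> rat) :
  (forall g j b, F (extend g j b) = G g * c (j != ord_max) b) ->
  \sum_(g : Gm m.+1) F g =
  (\sum_(g : Gm m) G g) * (m%:R * (c true true + c true false) + (c false true + c false false)).
Proof.
move=> F_extend.
have sum_index : \sum_(j < m.+1) \sum_(b : bool) c (j != ord_max) b =
    m%:R * (c true true + c true false) + (c false true + c false false).
  rewrite big_ord_recr /= eqxx !big_bool; congr (_ + _).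
  under eq_bigr => j _ do rewrite big_bool -val_eqE /= ltn_eqF //.
  by rewrite sumr_const card_ord mulr_natl.
rewrite big_extend mulr_suml; apply: eq_bigr => g _.
rewrite -sum_index mulr_sumr; apply: eq_bigr => j _; rewrite mulr_sumr.
by apply: eq_bigr => b _; apply: F_extend.
Qed.

Lemma chiB_extend m g (j : 'I_m.+1) b :
  chiB (extend g j b) = chiB g * ((j != ord_max) || ~~ b)%:R.
Proof. by rewrite /chiB condL_extend -natrM mulnb. Qed.

Lemma detG_extend m g (j : 'I_m.+1) b :
  detG (extend g j b) = detG g * (-1) ^+ (j != ord_max).
Proof. by rewrite /detG odd_extend_perm signr_addb. Qed.

Definition sum_chiB m := \sum_(g : Gm m) chiB g.

Definition sum_chiB_det m := \sum_(g : Gm m) chiB g * detG g.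

Lemma sum_chiBS m : sum_chiB m.+1 = sum_chiB m * (2 * m + 1)%:R.
Proof.
rewrite /sum_chiB (sum_extend_factor _ _ (@chiB m) (fun x b => (x || ~~ b)%:R)) /=.
  by congr (_ * _); rewrite natrD natrM; ring.
exact: chiB_extend.
Qed.

Lemma sum_chiB_detS m : sum_chiB_det m.+1 = sum_chiB_det m * (1 - (2 * m)%:R).
Proof.
rewrite /sum_chiB_det (sum_extend_factor _ _ (fun g => chiB g * detG g)
  (fun x b => (x || ~~ b)%:R * (-1) ^+ x)) /=.
  by congr (_ * _); rewrite natrM; ring.
by move=> g j b; rewrite chiB_extend detG_extend mulrACA.
Qed.

Lemma Gm0_condL_detG (g : Gm 0) : condL g /\ detG g = 1.
Proof.
split; first by apply/forallP => -[].
by rewrite /detG (_ : g.2 = 1%g) ?odd_perm1 //; apply/permP => -[].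
Qed.

Lemma sum_chiB0 : sum_chiB 0 = 1.
Proof.
rewrite /sum_chiB (eq_bigr (fun _ => 1)) ?sumr_const ?card_Gm // => g _.
by rewrite /chiB (Gm0_condL_detG g).1.
Qed.

Lemma sum_chiB_det0 : sum_chiB_det 0 = 1.
Proof.
rewrite /sum_chiB_det (eq_bigr (fun _ => 1)) ?sumr_const ?card_Gm // => g _.
by have [condLg ->] := Gm0_condL_detG g; rewrite /chiB condLg mulr1.
Qed.

Lemma sum_chiB_fact m : sum_chiB m * (2 ^ m * m`!)%:R = (2 * m)`!%:R.
Proof.
elim: m => [|m IHm]; first by rewrite sum_chiB0 mul1r.
have -> : (2 * m.+1 = (2 * m).+2)%N by rewrite mulnS.
rewrite sum_chiBS !factS expnS !natrM -IHm !natrM -!natr1 natrD natrM.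
ring.
Qed.

Lemma sum_chiB_detE m : sum_chiB_det m.+1 = (-1) ^+ m * sum_chiB m.
Proof.
elim: m => [|m IHm]; first by rewrite sum_chiB_detS sum_chiB_det0 sum_chiB0; ring.
by rewrite sum_chiB_detS IHm sum_chiBS exprS natrM natrD; ring.
Qed.

Lemma sum_chiB_central_binomial m :
  sum_chiB m / #|Gm m|%:R = 'C(2 * m, m)%:R / (4 ^ m)%:R.
Proof.
have fact_neq0 : m`!%:R != 0 :> rat by rewrite pnatr_eq0 -lt0n fact_gt0.
have pow2_neq0 : (2 ^ m)%:R != 0 :> rat by rewrite pnatr_eq0 -lt0n expn_gt0.
have binE : 'C(2 * m, m)%:R * (m`! * m`!)%:R = (2 * m)`!%:R :> rat.
  by rewrite -natrM -{4}[m](addnK m m) addnn -mul2n bin_fact // leq_pmull.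
have -> : sum_chiB m = (2 * m)`!%:R / (2 ^ m * m`!)%:R.
  by rewrite -sum_chiB_fact mulfK // natrM mulf_neq0.
have -> : 'C(2 * m, m)%:R = (2 * m)`!%:R / (m`! * m`!)%:R :> rat.
  by rewrite -binE mulfK // natrM mulf_neq0.
rewrite card_Gm -[4%N]/(2 * 2)%N expnMn !natrM.
by field; rewrite fact_neq0 pow2_neq0.
Qed.

Lemma sum_chiB_det_ratio m :
  sum_chiB_det m.+1 / #|Gm m.+1|%:R = (-1) ^+ m / (2 * m.+1)%:R * (sum_chiB m / #|Gm m|%:R).
Proof.
rewrite sum_chiB_detE card_GmS !natrM.
by field; rewrite natr_card_Gm_neq0 nat1r pnatr_eq0.
Qed.

Lemma sum_chiB_card m : sum_chiB m = #|Lset m|%:R.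
Proof.
rewrite /sum_chiB /Lset -sum1_card natr_sum [RHS]big_mkcond /=.
by apply: eq_bigr => g _; rewrite inE /chiB; case: (condL g).
Qed.

Theorem proposition12 (m : nat) (hm : (1 <= m)%N) :
  [/\ inner (@chiB m) (fun g => detG g * eps g * psi g)
        = 'C(2 * m, m)%:R / (4 ^ m)%:R,
      inner (@chiB m) (fun g => detG g * psi g)
        = (-1) ^+ (m + 1) / (2 * m)%:R * ('C(2 * m - 2, m - 1)%:R / (4 ^ (m - 1))%:R)
    & inner (@chiB m) (fun g => detG g * eps g * psi g)
        = #|Lset m|%:R / #|Gm m|%:R ].
Proof.
have innerE F : inner (@chiB m) F = (\sum_(g : Gm m) chiB g * F g) / #|Gm m|%:R.
  by rewrite /inner mulrC.
have inner_det_eps : inner (@chiB m) (fun g => detG g * eps g * psi g)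
    = sum_chiB m / #|Gm m|%:R.
  rewrite innerE; congr (_ / _); apply: eq_bigr => g _.
  by rewrite /detG /eps /psi -signr_addb addbb !mulr1.
split.
- by rewrite inner_det_eps sum_chiB_central_binomial.
- case: m hm {inner_det_eps} innerE => // n _ innerE.
  rewrite innerE (eq_bigr (fun g => chiB g * detG g)); last by move=> g _; rewrite /psi mulr1.
  rewrite sum_chiB_det_ratio sum_chiB_central_binomial subn1.
  have -> : (2 * n.+1 - 2 = 2 * n)%N by rewrite mulnS addKn.
  by rewrite addn1 !exprS !mulN1r opprK.
- by rewrite inner_det_eps sum_chiB_card.
Qed.
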